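(* (Soundness of $\mathcal{T}_{\mathrm{EFO}}$.) Every branch that is refutable in the tableau calculus $\mathcal{T}_{\mathrm{EFO}}$ is unsatisfiable.
   Context: Types: a countable set of base types including a distinguished $o$; other base types are sorts ($\alpha$). Types: base types and $\sigma\tau$ (functions from $\sigma$ to $\tau$; $\sigma\tau\mu=\sigma(\tau\mu)$). Countably many names with unique types, infinitely many per type. Terms: names; $st:\mu$ for $s:\tau\mu,t:\tau$; $\lambda x.t:\sigma\tau$ for a name $x:\sigma$, $t:\tau$. Logical constants: $\neg:oo$, $\to:ooo$, $=_\sigma:\sigma\sigma o$ for every type $\sigma$, and $\forall_\alpha:(\alpha o)o$ for every sort $\alpha$; all other names are variables. Formulas: terms of type $o$; $s=_\sigma t$ is $(=_\sigma s)t$, $s\neq_\sigma t$ is $\neg(s=_\sigma t)$, $s\to t$ is $(\to s)t$. A term is EFO if the only logical constants occurring in it are $\neg$, $\to$, $=_\alpha$ and $\forall_\alpha$ ($\alpha$ sorts); $\mathrm{EFO}_\sigma$ is the set of EFO terms of type $\sigma$. A formula is quasi-EFO if it is EFO or of the form $s\neq_\sigma t$ with $s,t$ EFO and $\sigma$ any type. Semantics: a frame $\mathcal{D}$ maps types to nonempty sets with $\mathcal{D}(\sigma\tau)\subseteq(\mathcal{D}\sigma\to\mathcal{D}\tau)$. An assignment $\mathcal{I}$ into $\mathcal{D}$ extends $\mathcal{D}$ and maps names $x:\sigma$ into $\mathcal{D}\sigma$; $\mathcal{I}^x_a$ is the update. Partial evaluation: $\hat{\mathcal{I}}x=\mathcal{I}x$;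 $\hat{\mathcal{I}}(st)=(\hat{\mathcal{I}}s)(\hat{\mathcal{I}}t)$ when defined; $\hat{\mathcal{I}}(\lambda x.s)=f$ if $\lambda x.s:\sigma\tau$, $f\in\mathcal{D}(\sigma\tau)$ and $\widehat{\mathcal{I}^x_a}s=fa$ for all $a\in\mathcal{D}\sigma$. An interpretation is an assignment with total evaluation. It is logical if $\mathcal{I}o=\{0,1\}$, $\mathcal{I}(\neg)$ is negation, $\mathcal{I}(\to)$ is implication, $\mathcal{I}(=_\sigma)$ is identity on $\mathcal{I}\sigma$, and $\mathcal{I}(\forall_\alpha)f=1$ iff $f$ is the constant function with value $1$. A set of formulas is satisfiable if some logical interpretation evaluates each of them to $1$. Normalization: fixed type-preserving total $[\cdot]$; $s$ normal iff $[s]=s$; (N1) $[[s]]=[s]$; (N2) $[[s]t]=[st]$; (N3) $[ys_1\dots s_n]=y[s_1]\dots[s_n]$ for a name $y$, $n\ge0$, $ys_1\dots s_n$ of base type; (N4) $\hat{\mathcal{I}}[s]=\hat{\mathcal{I}}s$ for every interpretation. Calculus $\mathcal{T}_{\mathrm{EFO}}$: an EFO branch is a set of normal quasi-EFO formulas. A rule instance $A/A_1\dots A_n$ has $A$ a finite EFO branch containing the premises, $A_i=A\cup$(formulas of the $i$-th alternative). A term $u$ is $\alpha$-discriminating in $A$ if $u\neq_\alpha t\in A$ or $t\neq_\alpha u\in A$ for some $t$. Rules ($x$ a variable): $\neg\neg s$ / $s$; $s\neq_ot$ / $\{s,\neg t\}\mid\{\neg s,t\}$; $s\to t$ / $\neg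 s\mid t$; $\neg(s\to t)$ / $\{s,\neg t\}$; (Mat) $xs_1\dots s_n,\neg xt_1\dots t_n$ / $s_1\neq t_1\mid\dots\mid s_n\neq t_n$ ($n\ge0$); (Dec) $xs_1\dots s_n\neq_\alpha xt_1\dots t_n$ / $s_1\neq t_1\mid\dots\mid s_n\neq t_n$ ($n\ge0$); (FE) $s\neq_{\sigma\tau}t$ / $[sx]\neq[tx]$ with $x:\sigma$ not free in $A$; (Con) $s=_\alpha t,u\neq_\alpha v$ / $\{s\neq u,t\neq u\}\mid\{s\neq v,t\neq v\}$; (All) $\forall_\alpha s$ / $[su]$ for normal $u\in\mathrm{EFO}_\alpha$; (AllN) $\neg\forall_\alpha s$ / $\neg[sx]$ with $x:\alpha$ not free in $A$. Restrictions: FE on $s\neq t$ only if no variable $x$ has $[sx]\neq[tx]\in A$; AllN on $\neg\forall_\alpha s$ only if no variable $x:\alpha$ has $\neg[sx]\in A$; All on $\forall_\alpha s\in A$: if there are $\alpha$-discriminating terms in $A$, only with those; if $[su]\notin A$ for all normal $u\in\mathrm{Wff}_\alpha$, there are no $\alpha$-discriminating terms in $A$ and some variable of type $\alpha$ occurs free in $A$, only with a variable $x:\alpha$ occurring free in $A$; if $[su]\notin A$ for all normal $u\in\mathrm{Wff}_\alpha$, there are no $\alpha$-discriminating terms and no variable of type $\alpha$ occurs free in $A$, only with a variable $x:\alpha$. Refutable branches: least set such that if $A/A_1\dots A_n$ is an admitted instance and all $A_i$ are refutable then $A$ is refutable. *)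

From Stdlib Require Import List PeanoNat.
Import ListNotations.

Inductive ty : Type := TB (n : nat) | TA (s t : ty).

Notation o := (TB 0).

Definition sort (a : ty) : Prop :=
  match a with TB (S _) => True | _ => False end.

Definition ty_eq_dec (a b : ty) : {a = b} + {a <> b}.
Proof. decide equality; apply Nat.eq_dec. Defined.

Definition ty_eqb (a b : ty) : bool := if ty_eq_dec a b then true else false.

(* A (variable) name is a pair (type, index): countably many, unique types,
   infinitely many per type.  The logical constants are separate names. *)
Definition name : Type := (ty * nat)%type.

Definition name_eq_dec (x y : name) : {x = y} + {x <> y}.
Proof. decide equality; [apply Nat.eq_dec | apply ty_eq_dec]. Defined.

Inductive lcon : Type := CNot | CImp | CEq (s : ty) | CAll (n : nat).

Definition ctype (c : lcon) : ty :=
  match c with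
  | CNot => TA o o
  | CImp => TA o (TA o o)
  | CEq s => TA s (TA s o)
  | CAll n => TA (TA (TB (S n)) o) o
  end.

Inductive tm : Type :=
| V (x : name)
| C (c : lcon)
| App (s t : tm)
| Lam (x : name) (s : tm).

Fixpoint tyof (s : tm) : option ty :=
  match s with
  | V x => Some (fst x)
  | C c => Some (ctype c)
  | App s t =>
      match tyof s, tyof t with
      | Some (TA a b), Some a' => if ty_eqb a a' then Some b else None
      | _, _ => None
      end
  | Lam x s => option_map (TA (fst x)) (tyof s)
  end.

Definition wt (s : tm) : Prop := exists a, tyof s = Some a.

Definition apps (h : tm) (l : list tm) : tm := fold_left App l h.

Definition Not_ (s : tm) : tm := App (C CNot) s.
Definition Imp_ (s t : tm) : tm := App (App (C CImp) s) t.
Definition Eq_ (a : ty) (s t : tm) : tm := App (App (C (CEq a)) s) t.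
Definition Neq (a : ty) (s t : tm) : tm := Not_ (Eq_ a s t).
Definition All_ (n : nat) (s : tm) : tm := App (C (CAll n)) s.
(* s <> t at the type of s (the paper's untyped notation s <> t) *)
Definition neqt (s t : tm) : tm :=
  Neq (match tyof s with Some a => a | None => o end) s t.

Fixpoint free (x : name) (s : tm) : Prop :=
  match s with
  | V y => x = y
  | C _ => False
  | App s t => free x s \/ free x t
  | Lam y s => x <> y /\ free x s
  end.

(* A frame: nonempty sets D s, with D (s t) a set of functions D s -> D t
   (represented by an injective application map). *)
Record frame : Type := {
  dom : ty -> Type;
  fn : forall s t, dom (TA s t) -> dom s -> dom t;
  fn_inj : forall s t (f g : dom (TA s t)), (forall a, fn s t f a = fn s t g a) -> f = g;
  dom_ne : forall s, inhabited (dom s)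
}.

Record asg (D : frame) : Type := {
  avar : forall x : name, dom D (fst x);
  acon : forall c : lcon, dom D (ctype c)
}.
Arguments avar {D} _ _.
Arguments acon {D} _ _.

Definition upd {D : frame} (I : asg D) (x : name) (a : dom D (fst x)) : asg D :=
  {| avar := fun y =>
       match name_eq_dec x y with
       | left e => eq_rect x (fun z => dom D (fst z)) a y e
       | right _ => avar I y
       end;
     acon := acon I |}.

Inductive eval (D : frame) : asg D -> tm -> forall a : ty, dom D a -> Prop :=
| ev_var I x : eval D I (V x) (fst x) (avar I x)
| ev_con I c : eval D I (C c) (ctype c) (acon I c)
| ev_app I s t a b f v :
    eval D I s (TA a b) f -> eval D I t a v -> eval D I (App s t) b (fn D a b f v)
| ev_lam I x s b (f : dom D (TA (fst x) b)) :
    (forall a : dom D (fst x), eval D (upd I x a) s b (fn D (fst x) b f a)) ->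
    eval D I (Lam x s) (TA (fst x) b) f.

Definition interpretation (D : frame) (I : asg D) : Prop :=
  forall s a, tyof s = Some a -> exists v, eval D I s a v.

(* Logical: D o = {0,1} (via the bijection bo), constants have their intended meaning. *)
Definition logical (D : frame) (I : asg D) (bo : dom D o -> bool) : Prop :=
  (forall p q, bo p = bo q -> p = q) /\ (forall b, exists p, bo p = b) /\
  (forall p, bo (fn D o o (acon I CNot) p) = negb (bo p)) /\
  (forall p q, bo (fn D o o (fn D o (TA o o) (acon I CImp) p) q) = implb (bo p) (bo q)) /\
  (forall s p q, bo (fn D s o (fn D s (TA s o) (acon I (CEq s)) p) q) = true <-> p = q) /\
  (forall n (f : dom D (TA (TB (S n)) o)),
      bo (fn D (TA (TB (S n)) o) o (acon I (CAll n)) f) = true <->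
      forall a, bo (fn D (TB (S n)) o f a) = true).

Definition satisfiable (A : tm -> Prop) : Prop :=
  exists (D : frame) (I : asg D) (bo : dom D o -> bool),
    interpretation D I /\ logical D I bo /\
    forall s, A s -> exists v, eval D I s o v /\ bo v = true.

Record normalizer (nf : tm -> tm) : Prop := {
  nf_ty : forall s a, tyof s = Some a -> tyof (nf s) = Some a;
  nf_N1 : forall s, wt s -> nf (nf s) = nf s;
  nf_N2 : forall s t, wt (App s t) -> nf (App (nf s) t) = nf (App s t);
  nf_N3 : forall (y : tm) (l : list tm) (b : nat),
      (exists x, y = V x) \/ (exists c, y = C c) ->
      tyof (apps y l) = Some (TB b) -> nf (apps y l) = apps y (map nf l);
  nf_N4 : forall (D : frame) (I : asg D), interpretation D I ->
      forall s a (v : dom D a), tyof s = Some a -> (eval D I (nf s) a v <-> eval D I s a v)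
}.

Fixpoint efo_consts (s : tm) : Prop :=
  match s with
  | V _ => True
  | C (CEq a) => sort a
  | C _ => True
  | App s t => efo_consts s /\ efo_consts t
  | Lam _ s => efo_consts s
  end.

Definition efo (s : tm) : Prop := wt s /\ efo_consts s.

Definition quasi_efo (s : tm) : Prop :=
  (efo s /\ tyof s = Some o) \/
  exists a u v, s = Neq a u v /\ efo u /\ efo v /\ tyof u = Some a /\ tyof v = Some a.

Definition normal (nf : tm -> tm) (s : tm) : Prop := nf s = s.

Definition efo_branch (nf : tm -> tm) (A : tm -> Prop) : Prop :=
  forall s, A s -> normal nf s /\ quasi_efo s.

Definition finite_set (A : tm -> Prop) : Prop :=
  exists l : list tm, forall s, A s <-> In s l.

Definition free_in (x : name) (A : tm -> Prop) : Prop := exists s, A s /\ free x s.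

Definition discriminating (A : tm -> Prop) (a : ty) (u : tm) : Prop :=
  exists t, A (Neq a u t) \/ A (Neq a t u).

Definition all_restr (nf : tm -> tm) (A : tm -> Prop) (n : nat) (s u : tm) : Prop :=
  let al := TB (S n) in
  ((exists u', discriminating A al u') -> discriminating A al u) /\
  ((forall u', normal nf u' -> tyof u' = Some al -> ~ A (nf (App s u'))) ->
   ~ (exists u', discriminating A al u') ->
   (exists y, fst y = al /\ free_in y A) ->
   exists x, u = V x /\ fst x = al /\ free_in x A) /\
  ((forall u', normal nf u' -> tyof u' = Some al -> ~ A (nf (App s u'))) ->
   ~ (exists u', discriminating A al u') ->
   ~ (exists y, fst y = al /\ free_in y A) ->
   exists x, u = V x /\ fst x = al).

(* Rule instances A / A u alt_1 | ... | A u alt_n ; alternatives listed as formula lists *)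
Inductive rule (nf : tm -> tm) (A : tm -> Prop) : list (list tm) -> Prop :=
| r_notnot s : A (Not_ (Not_ s)) -> rule nf A [[s]]
| r_boolext s t : A (Neq o s t) -> rule nf A [[s; Not_ t]; [Not_ s; t]]
| r_imp s t : A (Imp_ s t) -> rule nf A [[Not_ s]; [t]]
| r_nimp s t : A (Not_ (Imp_ s t)) -> rule nf A [[s; Not_ t]]
| r_mat x ss ts :
    length ss = length ts ->
    A (apps (V x) ss) -> A (Not_ (apps (V x) ts)) ->
    rule nf A (map (fun p => [neqt (fst p) (snd p)]) (combine ss ts))
| r_dec a x ss ts :
    sort a -> length ss = length ts ->
    A (Neq a (apps (V x) ss) (apps (V x) ts)) ->
    rule nf A (map (fun p => [neqt (fst p) (snd p)]) (combine ss ts))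
| r_fe a b s t (x : name) :
    A (Neq (TA a b) s t) -> fst x = a -> ~ free_in x A ->
    (forall y : name, fst y = a ->
       ~ A (Neq b (nf (App s (V y))) (nf (App t (V y))))) ->
    rule nf A [[Neq b (nf (App s (V x))) (nf (App t (V x)))]]
| r_con a s t u v :
    sort a -> A (Eq_ a s t) -> A (Neq a u v) ->
    rule nf A [[Neq a s u; Neq a t u]; [Neq a s v; Neq a t v]]
| r_all n s u :
    A (All_ n s) -> normal nf u -> efo u -> tyof u = Some (TB (S n)) ->
    all_restr nf A n s u ->
    rule nf A [[nf (App s u)]]
| r_alln n s (x : name) :
    A (Not_ (All_ n s)) -> fst x = TB (S n) -> ~ free_in x A ->
    (forall y : name, fst y = TB (S n) -> ~ A (Not_ (nf (App s (V y))))) ->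
    rule nf A [[Not_ (nf (App s (V x)))]].

(* admitted instance: A is a finite EFO branch (premises in A are part of [rule]) *)
Definition admitted (nf : tm -> tm) (A : tm -> Prop) (alts : list (list tm)) : Prop :=
  finite_set A /\ efo_branch nf A /\ rule nf A alts.

Inductive refutable (nf : tm -> tm) : (tm -> Prop) -> Prop :=
| refute A alts :
    admitted nf A alts ->
    (forall X, In X alts -> refutable nf (fun s => A s \/ In s X)) ->
    refutable nf A.

(* Each rule is locally sound: if a logical interpretation satisfies the branch of an
   admitted instance, some alternative is satisfied as well, either by the same
   interpretation or, for FE and AllN, by its update at the fresh variable, which leaves
   the values of the branch unchanged since the variable does not occur in it.  For Mat
   and Dec, if no pair of arguments took distinct values, both spines x s1 .. sn and
   x t1 .. tn would take the same value. *)

From Stdlib Require Import List Bool Classical FunctionalExtensionality Eqdep_dec.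
Import ListNotations.

Lemma asg_eq (D : frame) (I J : asg D) : avar I = avar J -> acon I = acon J -> I = J.
Proof. destruct I, J; simpl; intros; subst; reflexivity. Qed.

Lemma upd_same (D : frame) (I : asg D) x a : avar (upd I x a) x = a.
Proof.
  simpl; destruct (name_eq_dec x x) as [e|]; [|contradiction].
  rewrite (UIP_dec name_eq_dec e eq_refl); reflexivity.
Qed.

Lemma upd_other (D : frame) (I : asg D) x a y : x <> y -> avar (upd I x a) y = avar I y.
Proof. intros Hxy; simpl; destruct (name_eq_dec x y); [contradiction|reflexivity]. Qed.

Lemma upd_upd_same (D : frame) (I : asg D) x a b : upd (upd I x b) x a = upd I x a.
Proof.
  apply asg_eq; [|reflexivity]; apply functional_extensionality_dep; intros z.
  simpl; destruct (name_eq_dec x z); reflexivity.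
Qed.

Lemma upd_comm (D : frame) (I : asg D) x y a b :
  x <> y -> upd (upd I x b) y a = upd (upd I y a) x b.
Proof.
  intros Hxy; apply asg_eq; [|reflexivity]; apply functional_extensionality_dep; intros z.
  simpl; destruct (name_eq_dec y z), (name_eq_dec x z); subst; congruence.
Qed.

Local Ltac invert_eval H :=
  inversion H; subst;
  repeat match goal with
    | E : existT _ _ _ = existT _ _ _ |- _ =>
        apply (inj_pair2_eq_dec _ ty_eq_dec) in E; subst
    end.

Section Evaluation.
Variable D : frame.

Lemma eval_var_inv I x w : eval D I (V x) (fst x) w -> w = avar I x.
Proof. intros H; invert_eval H; reflexivity. Qed.

Lemma eval_con_inv I c w : eval D I (C c) (ctype c) w -> w = acon I c.
Proof. intros H; invert_eval H; reflexivity. Qed.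

Lemma eval_app_inv I s t b w : eval D I (App s t) b w ->
  exists a f v, eval D I s (TA a b) f /\ eval D I t a v /\ w = fn D a b f v.
Proof. intros H; invert_eval H; eauto 10. Qed.

Lemma eval_lam_inv I x s b f : eval D I (Lam x s) (TA (fst x) b) f ->
  forall a, eval D (upd I x a) s b (fn D (fst x) b f a).
Proof. intros H; invert_eval H; assumption. Qed.

Lemma eval_tyof I s a v : eval D I s a v -> tyof s = Some a.
Proof.
  induction 1 as [| |I s t a b f v _ IHs _ IHt|I x s b f _ IHf]; simpl; auto.
  - rewrite IHs, IHt; unfold ty_eqb; destruct (ty_eq_dec a a); congruence.
  - destruct (dom_ne D (fst x)) as [a]; rewrite (IHf a); reflexivity.
Qed.

Lemma eval_det I s a v : eval D I s a v -> forall w, eval D I s a w -> v = w.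
Proof.
  induction 1 as [I x|I c|I s t a b f v Hs IHs _ IHt|I x s b f _ IHf]; intros w Hw.
  - symmetry; apply eval_var_inv; assumption.
  - symmetry; apply eval_con_inv; assumption.
  - destruct (eval_app_inv _ _ _ _ _ Hw) as (a' & f' & v' & Hs' & Ht' & ->).
    assert (a' = a) as ->.
    { apply eval_tyof in Hs, Hs'; congruence. }
    rewrite (IHs _ Hs'), (IHt _ Ht'); reflexivity.
  - apply fn_inj; intros a; apply IHf, eval_lam_inv, Hw.
Qed.

Lemma eval_upd_not_free I s a v : eval D I s a v ->
  forall x b, ~ free x s -> eval D (upd I x b) s a v.
Proof.
  induction 1 as [I y|I c|I s t a0 b0 f v _ IHs _ IHt|I y s b0 f Hf IHf];
    intros x b Hx; simpl in Hx.
  - rewrite <- (upd_other D I x b y Hx); apply ev_var.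
  - exact (ev_con D (upd I x b) c).
  - eapply ev_app; [apply IHs|apply IHt]; tauto.
  - apply ev_lam; intros a; destruct (name_eq_dec x y) as [<-|Hxy].
    + rewrite upd_upd_same; apply Hf.
    + rewrite (upd_comm D I x y a b Hxy); apply IHf; tauto.
Qed.

Lemma eval_upd_var I x a : eval D (upd I x a) (V x) (fst x) a.
Proof. rewrite <- (upd_same D I x a) at 2; apply ev_var. Qed.

Lemma interpretation_upd I x a : interpretation D I -> interpretation D (upd I x a).
Proof.
  intros HI s c Hs; destruct (HI (Lam x s) (TA (fst x) c)) as [f Hf].
  - simpl; rewrite Hs; reflexivity.
  - eexists; apply eval_lam_inv, Hf.
Qed.

Lemma eval_nf nf I s a v : normalizer nf -> interpretation D I ->
  eval D I s a v -> eval D I (nf s) a v.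
Proof.
  intros Hnf HI Hs; apply (nf_N4 nf Hnf D I HI); [eapply eval_tyof|]; eassumption.
Qed.

Definition same_value I (s t : tm) : Prop :=
  forall a v w, eval D I s a v -> eval D I t a w -> v = w.

(* Types are only required to agree where both are defined, since one spine prefix may be
   ill-typed while the other is not. *)
Definition same_type (s t : tm) : Prop :=
  forall a b, tyof s = Some a -> tyof t = Some b -> a = b.

Lemma app_tyof s t c : tyof (App s t) = Some c ->
  exists a, tyof s = Some (TA a c) /\ tyof t = Some a.
Proof.
  simpl; destruct (tyof s) as [[|a b]|]; try discriminate.
  destruct (tyof t) as [a'|]; try discriminate.
  unfold ty_eqb; destruct (ty_eq_dec a a'); intros H; try discriminate.
  injection H as <-; subst; eauto.
Qed.

Lemma same_type_app h1 h2 s t : same_type h1 h2 -> same_type (App h1 s) (App h2 t).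
Proof.
  intros Hh c1 c2 T1 T2.
  destruct (app_tyof _ _ _ T1) as (a1 & H1 & _), (app_tyof _ _ _ T2) as (a2 & H2 & _).
  specialize (Hh _ _ H1 H2); congruence.
Qed.

Lemma same_value_app I h1 h2 s t : same_type h1 h2 -> same_value I h1 h2 ->
  same_value I s t -> same_value I (App h1 s) (App h2 t).
Proof.
  intros Ht Hh Hst c w1 w2 E1 E2.
  destruct (eval_app_inv _ _ _ _ _ E1) as (a1 & f1 & v1 & F1 & A1 & ->).
  destruct (eval_app_inv _ _ _ _ _ E2) as (a2 & f2 & v2 & F2 & A2 & ->).
  assert (a2 = a1) as ->.
  { apply eval_tyof in F1, F2; specialize (Ht _ _ F1 F2); congruence. }
  rewrite (Hh _ _ _ F1 F2), (Hst _ _ _ A1 A2); reflexivity.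
Qed.

Lemma same_value_apps I ss ts : Forall2 (same_value I) ss ts ->
  forall h1 h2, same_type h1 h2 -> same_value I h1 h2 ->
  same_value I (apps h1 ss) (apps h2 ts).
Proof.
  induction 1 as [|s t ss ts Hst _ IH]; intros h1 h2 Ht Hh; [exact Hh|].
  apply IH; [apply same_type_app|apply same_value_app]; assumption.
Qed.

Lemma same_value_var I x : same_value I (V x) (V x).
Proof. intros a v w Hv Hw; exact (eval_det _ _ _ _ Hv _ Hw). Qed.

Lemma same_type_var x : same_type (V x) (V x).
Proof. intros a b Ha Hb; simpl in Ha, Hb; congruence. Qed.

End Evaluation.

Lemma Forall2_of_combine {A B} (R : A -> B -> Prop) l1 l2 :
  length l1 = length l2 -> (forall p, In p (combine l1 l2) -> R (fst p) (snd p)) ->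
  Forall2 R l1 l2.
Proof.
  revert l2; induction l1 as [|x l1 IH]; intros [|y l2] Hl Hp; try discriminate;
    constructor.
  - apply (Hp (x, y)); left; reflexivity.
  - apply IH; [injection Hl; auto|intros p Hin; apply Hp; right; exact Hin].
Qed.

Definition holds (D : frame) (I : asg D) (bo : dom D o -> bool) (s : tm) : Prop :=
  exists v, eval D I s o v /\ bo v = true.

Definition fails (D : frame) (I : asg D) (bo : dom D o -> bool) (s : tm) : Prop :=
  exists v, eval D I s o v /\ bo v = false.

Definition sat (D : frame) (I : asg D) (bo : dom D o -> bool) (A : tm -> Prop) : Prop :=
  forall s, A s -> holds D I bo s.

Section Connectives.
Variables (D : frame) (I : asg D) (bo : dom D o -> bool).
Hypothesis HL : logical D I bo.

Lemma eval_Not_inv s w : eval D I (Not_ s) o w ->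
  exists v, eval D I s o v /\ bo w = negb (bo v).
Proof.
  destruct HL as (_ & _ & Hnot & _); intros H.
  destruct (eval_app_inv _ _ _ _ _ _ H) as (a & f & v & Hf & Hv & ->).
  assert (a = o) as -> by (apply eval_tyof in Hf; simpl in Hf; congruence).
  rewrite (eval_con_inv _ _ CNot f Hf); eauto.
Qed.

Lemma holds_Not s : holds D I bo (Not_ s) <-> fails D I bo s.
Proof.
  split.
  - intros (w & Hw & Hb); destruct (eval_Not_inv _ _ Hw) as (v & Hv & E).
    exists v; split; [exact Hv|]; rewrite Hb in E; destruct (bo v); easy.
  - destruct HL as (_ & _ & Hnot & _); intros (v & Hv & Hb).
    eexists; split; [eapply ev_app; [exact (ev_con D I CNot)|exact Hv]|]; rewrite Hnot, Hb; reflexivity.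
Qed.

Lemma fails_Not s : fails D I bo (Not_ s) -> holds D I bo s.
Proof.
  intros (w & Hw & Hb); destruct (eval_Not_inv _ _ Hw) as (v & Hv & E).
  exists v; split; [exact Hv|]; rewrite Hb in E; destruct (bo v); easy.
Qed.

Lemma eval_Eq_inv a s t w : eval D I (Eq_ a s t) o w ->
  exists v1 v2, eval D I s a v1 /\ eval D I t a v2 /\ (bo w = true <-> v1 = v2).
Proof.
  destruct HL as (_ & _ & _ & _ & Heq & _); intros H.
  destruct (eval_app_inv _ _ _ _ _ _ H) as (a1 & f & v2 & Hf & Hv2 & ->).
  destruct (eval_app_inv _ _ _ _ _ _ Hf) as (a2 & g & v1 & Hg & Hv1 & ->).
  assert (a2 = a /\ a1 = a) as [-> ->]
    by (apply eval_tyof in Hg; simpl in Hg; split; congruence).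
  rewrite (eval_con_inv _ _ (CEq a) g Hg); eauto 10.
Qed.

Lemma holds_Eq a s t : holds D I bo (Eq_ a s t) ->
  exists v, eval D I s a v /\ eval D I t a v.
Proof.
  intros (w & Hw & Hb); destruct (eval_Eq_inv _ _ _ _ Hw) as (v1 & v2 & H1 & H2 & E).
  apply E in Hb; subst; eauto.
Qed.

Lemma holds_Neq a s t : holds D I bo (Neq a s t) <->
  exists v1 v2, eval D I s a v1 /\ eval D I t a v2 /\ v1 <> v2.
Proof.
  unfold Neq; rewrite holds_Not; split.
  - intros (w & Hw & Hb); destruct (eval_Eq_inv _ _ _ _ Hw) as (v1 & v2 & H1 & H2 & E).
    exists v1, v2; rewrite <- E, Hb; auto.
  - intros (v1 & v2 & H1 & H2 & Hne).
    assert (Hw : eval D I (Eq_ a s t) o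
                   (fn D a o (fn D a (TA a o) (acon I (CEq a)) v1) v2))
      by (eapply ev_app; [eapply ev_app; [exact (ev_con D I (CEq a))|]|]; eassumption).
    destruct (eval_Eq_inv _ _ _ _ Hw) as (u1 & u2 & K1 & K2 & E).
    rewrite (eval_det _ _ _ _ _ H1 _ K1), (eval_det _ _ _ _ _ H2 _ K2) in Hne.
    exists (fn D a o (fn D a (TA a o) (acon I (CEq a)) v1) v2); split; [exact Hw|].
    apply not_true_is_false; rewrite E; exact Hne.
Qed.

Lemma eval_Imp_inv s t w : eval D I (Imp_ s t) o w ->
  exists v1 v2, eval D I s o v1 /\ eval D I t o v2 /\ bo w = implb (bo v1) (bo v2).
Proof.
  destruct HL as (_ & _ & _ & Himp & _); intros H.
  destruct (eval_app_inv _ _ _ _ _ _ H) as (a1 & f & v2 & Hf & Hv2 & ->).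
  destruct (eval_app_inv _ _ _ _ _ _ Hf) as (a2 & g & v1 & Hg & Hv1 & ->).
  assert (a2 = o /\ a1 = o) as [-> ->]
    by (apply eval_tyof in Hg; simpl in Hg; split; congruence).
  rewrite (eval_con_inv _ _ CImp g Hg), Himp; eauto 10.
Qed.

Lemma holds_Imp s t : holds D I bo (Imp_ s t) -> fails D I bo s \/ holds D I bo t.
Proof.
  intros (w & Hw & Hb); destruct (eval_Imp_inv _ _ _ Hw) as (v1 & v2 & H1 & H2 & E).
  rewrite Hb in E; destruct (bo v1) eqn:B1; [right|left]; eexists; eauto.
Qed.

Lemma fails_Imp s t : fails D I bo (Imp_ s t) -> holds D I bo s /\ fails D I bo t.
Proof.
  intros (w & Hw & Hb); destruct (eval_Imp_inv _ _ _ Hw) as (v1 & v2 & H1 & H2 & E).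
  rewrite Hb in E; destruct (bo v1) eqn:B1, (bo v2) eqn:B2; try discriminate.
  split; eexists; eauto.
Qed.

Lemma eval_All_inv n s w : eval D I (All_ n s) o w ->
  exists f, eval D I s (TA (TB (S n)) o) f /\
    (bo w = true <-> forall a, bo (fn D (TB (S n)) o f a) = true).
Proof.
  destruct HL as (_ & _ & _ & _ & _ & Hall); intros H.
  destruct (eval_app_inv _ _ _ _ _ _ H) as (a & f & v & Hf & Hv & ->).
  assert (a = TA (TB (S n)) o) as -> by (apply eval_tyof in Hf; simpl in Hf; congruence).
  rewrite (eval_con_inv _ _ (CAll n) f Hf); eauto.
Qed.

Lemma holds_All n s : holds D I bo (All_ n s) ->
  exists f, eval D I s (TA (TB (S n)) o) f /\ forall a, bo (fn D (TB (S n)) o f a) = true.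
Proof.
  intros (w & Hw & Hb); destruct (eval_All_inv _ _ _ Hw) as (f & Hf & E).
  exists f; split; [exact Hf|]; apply E, Hb.
Qed.

Lemma fails_All n s : fails D I bo (All_ n s) ->
  exists f, eval D I s (TA (TB (S n)) o) f /\ exists a, bo (fn D (TB (S n)) o f a) = false.
Proof.
  intros (w & Hw & Hb); destruct (eval_All_inv _ _ _ Hw) as (f & Hf & E).
  exists f; split; [exact Hf|].
  assert (Hnall : ~ forall a, bo (fn D (TB (S n)) o f a) = true)
    by (rewrite <- E, Hb; discriminate).
  destruct (not_all_ex_not _ _ Hnall) as [a Ha]; exists a; apply not_true_is_false, Ha.
Qed.

End Connectives.

Section Rules.
Variables (D : frame) (I : asg D) (bo : dom D o -> bool).
Hypothesis HL : logical D I bo.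

Lemma boolext_sound s t : holds D I bo (Neq o s t) ->
  holds D I bo s /\ fails D I bo t \/ fails D I bo s /\ holds D I bo t.
Proof.
  destruct HL as (Hinj & _); rewrite holds_Neq by exact HL.
  intros (v1 & v2 & H1 & H2 & Hne).
  destruct (bo v1) eqn:B1, (bo v2) eqn:B2;
    try (exfalso; apply Hne, Hinj; congruence); [left|right];
    split; eexists; eauto.
Qed.

Lemma same_value_of_not_neqt s t : ~ holds D I bo (neqt s t) -> same_value D I s t.
Proof.
  intros Hn a v w Hv Hw; apply NNPP; intros Hne; apply Hn.
  unfold neqt; rewrite (eval_tyof _ _ _ _ _ Hv), holds_Neq by exact HL; eauto.
Qed.

Lemma apps_discriminate x ss ts : length ss = length ts ->
  (exists p, In p (combine ss ts) /\ holds D I bo (neqt (fst p) (snd p))) \/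
  same_value D I (apps (V x) ss) (apps (V x) ts).
Proof.
  intros Hlen; destruct (classic (exists p, In p (combine ss ts) /\
                                     holds D I bo (neqt (fst p) (snd p)))) as [|Hno];
    [left; assumption|right].
  apply same_value_apps; [|apply same_type_var|apply same_value_var].
  apply Forall2_of_combine; [exact Hlen|]; intros p Hp.
  apply same_value_of_not_neqt; intros Hh; apply Hno; eauto.
Qed.

Lemma mat_sound x ss ts : length ss = length ts ->
  holds D I bo (apps (V x) ss) -> fails D I bo (apps (V x) ts) ->
  exists p, In p (combine ss ts) /\ holds D I bo (neqt (fst p) (snd p)).
Proof.
  intros Hlen (v & Hv & Hb) (w & Hw & Hb').
  destruct (apps_discriminate x _ _ Hlen) as [|Hsame]; [assumption|].
  rewrite (Hsame _ _ _ Hv Hw) in Hb; congruence.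
Qed.

Lemma dec_sound a x ss ts : length ss = length ts ->
  holds D I bo (Neq a (apps (V x) ss) (apps (V x) ts)) ->
  exists p, In p (combine ss ts) /\ holds D I bo (neqt (fst p) (snd p)).
Proof.
  rewrite holds_Neq by exact HL; intros Hlen (v1 & v2 & H1 & H2 & Hne).
  destruct (apps_discriminate x _ _ Hlen) as [|Hsame]; [assumption|].
  contradiction (Hsame _ _ _ H1 H2).
Qed.

Lemma con_sound a s t u v : holds D I bo (Eq_ a s t) -> holds D I bo (Neq a u v) ->
  holds D I bo (Neq a s u) /\ holds D I bo (Neq a t u) \/
  holds D I bo (Neq a s v) /\ holds D I bo (Neq a t v).
Proof.
  intros Hst Huv; apply holds_Eq in Hst as (w & Hs & Ht); [|exact HL].
  rewrite !holds_Neq in * by exact HL; destruct Huv as (wu & wv & Hu & Hv & Hne).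
  destruct (classic (w = wu)) as [<-|Hwu]; [right|left]; split; eauto 7.
Qed.

Lemma all_sound nf n s u : normalizer nf -> interpretation D I ->
  holds D I bo (All_ n s) -> tyof u = Some (TB (S n)) -> holds D I bo (nf (App s u)).
Proof.
  intros Hnf HI Hall Hu; apply holds_All in Hall as (f & Hf & Htrue); [|exact HL].
  destruct (HI u _ Hu) as (a & Ha).
  exists (fn D (TB (S n)) o f a); split; [|apply Htrue].
  apply (eval_nf _ _ _ _ _ _ Hnf HI); eapply ev_app; eassumption.
Qed.

Lemma fe_sound nf b s t x : normalizer nf -> interpretation D I ->
  ~ free x s -> ~ free x t -> holds D I bo (Neq (TA (fst x) b) s t) ->
  exists a, holds D (upd I x a) bo (Neq b (nf (App s (V x))) (nf (App t (V x)))).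
Proof.
  intros Hnf HI Hs Ht; rewrite holds_Neq by exact HL; intros (f & g & Hf & Hg & Hne).
  assert (Hpt : exists a, fn D (fst x) b f a <> fn D (fst x) b g a).
  { apply NNPP; intros Hn; apply Hne, fn_inj; intros a.
    apply NNPP; intros Ha; apply Hn; eauto. }
  destruct Hpt as (a & Ha); exists a.
  assert (HI' : interpretation D (upd I x a)) by (apply interpretation_upd, HI).
  apply holds_Neq; [exact HL|]; do 2 eexists; split; [|split; [|exact Ha]];
    apply (eval_nf _ _ _ _ _ _ Hnf HI'); eapply ev_app;
    solve [apply eval_upd_not_free; eassumption | apply eval_upd_var].
Qed.

Lemma alln_sound nf n k s : normalizer nf -> interpretation D I ->
  ~ free (TB (S n), k) s -> fails D I bo (All_ n s) ->
  exists a, fails D (upd I (TB (S n), k) a) bo (nf (App s (V (TB (S n), k)))).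
Proof.
  intros Hnf HI Hs Hall; apply fails_All in Hall as (f & Hf & a & Ha); [|exact HL].
  exists a, (fn D (TB (S n)) o f a); split; [|exact Ha].
  apply (eval_nf _ _ _ _ _ _ Hnf (interpretation_upd _ _ _ _ HI)).
  eapply ev_app; [apply eval_upd_not_free; eassumption|apply eval_upd_var].
Qed.

End Rules.

Lemma sat_upd (D : frame) I bo A x a :
  sat D I bo A -> ~ free_in x A -> sat D (upd I x a) bo A.
Proof.
  intros HA Hx s Hs; destruct (HA s Hs) as (v & Hv & Hb); exists v; split; [|exact Hb].
  apply eval_upd_not_free; [exact Hv|]; intros Hf; apply Hx; exists s; auto.
Qed.

Lemma satisfiable_extend (D : frame) I bo A X :
  logical D I bo -> interpretation D I -> sat D I bo A -> Forall (holds D I bo) X ->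
  satisfiable (fun s => A s \/ In s X).
Proof.
  intros HL HI HA HX; exists D, I, bo; split; [exact HI|split; [exact HL|]].
  intros s [Hs|Hs]; [exact (HA s Hs)|exact (proj1 (Forall_forall _ _) HX s Hs)].
Qed.

Local Ltac extend_model J HL :=
  apply (satisfiable_extend _ J _ _ _ HL); auto using interpretation_upd, sat_upd;
  repeat apply Forall_cons; auto using Forall_nil.

Lemma rule_sound nf A alts : normalizer nf -> rule nf A alts -> satisfiable A ->
  exists X, In X alts /\ satisfiable (fun s => A s \/ In s X).
Proof.
  intros Hnf HR (D & I & bo & HI & HL & HA).
  assert (Hin : forall s, A s -> holds D I bo s) by exact HA.
  assert (HNot : forall s, fails D I bo s -> holds D I bo (Not_ s))
    by (intros s; apply (holds_Not D I bo HL)).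
  destruct HR as [s Hnn | s t Hne | s t Himp | s t Hnimp | x ss ts Hlen Hpos Hneg
                 | a x ss ts _ Hlen Hdec | a b s t x Hne Hx Hfresh _ | a s t u v _ Heq Hne
                 | n s u Hall _ _ Hu _ | n s x Hnall Hx Hfresh _].
  - exists [s]; split; [now left|extend_model I HL].
    apply (fails_Not D I bo HL), (holds_Not D I bo HL), Hin, Hnn.
  - destruct (boolext_sound D I bo HL s t (Hin _ Hne)) as [[Hs Ht]|[Hs Ht]];
      [exists [s; Not_ t]|exists [Not_ s; t]]; (split; [simpl; auto|extend_model I HL]).
  - destruct (holds_Imp D I bo HL s t (Hin _ Himp)) as [Hs|Ht];
      [exists [Not_ s]|exists [t]]; (split; [simpl; auto|extend_model I HL]).
  - apply Hin, (holds_Not D I bo HL) in Hnimp.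
    destruct (fails_Imp D I bo HL s t Hnimp) as [Hs Ht].
    exists [s; Not_ t]; split; [now left|extend_model I HL].
  - apply Hin, (holds_Not D I bo HL) in Hneg.
    destruct (mat_sound D I bo HL x ss ts Hlen (Hin _ Hpos) Hneg) as (p & Hp & Hh).
    exists [neqt (fst p) (snd p)]; split; [apply in_map_iff; eauto|extend_model I HL].
  - destruct (dec_sound D I bo HL a x ss ts Hlen (Hin _ Hdec)) as (p & Hp & Hh).
    exists [neqt (fst p) (snd p)]; split; [apply in_map_iff; eauto|extend_model I HL].
  - subst a.
    assert (Hs : ~ free x s)
      by (intros Hxs; apply Hfresh; exists (Neq (TA (fst x) b) s t); simpl; tauto).
    assert (Ht : ~ free x t)
      by (intros Hxt; apply Hfresh; exists (Neq (TA (fst x) b) s t); simpl; tauto).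
    destruct (fe_sound D I bo HL nf b s t x Hnf HI Hs Ht (Hin _ Hne)) as (a & Ha).
    exists [Neq b (nf (App s (V x))) (nf (App t (V x)))]; split; [now left|].
    extend_model (upd I x a) HL.
  - destruct (con_sound D I bo HL a s t u v (Hin _ Heq) (Hin _ Hne)) as [[Hs Ht]|[Hs Ht]];
      [exists [Neq a s u; Neq a t u]|exists [Neq a s v; Neq a t v]];
      (split; [simpl; auto|extend_model I HL]).
  - exists [nf (App s u)]; split; [now left|extend_model I HL].
    exact (all_sound D I bo HL nf n s u Hnf HI (Hin _ Hall) Hu).
  - destruct x as [xa k]; simpl in Hx; subst xa.
    assert (Hs : ~ free (TB (S n), k) s)
      by (intros Hxs; apply Hfresh; exists (Not_ (All_ n s)); simpl; tauto).
    apply Hin, (holds_Not D I bo HL) in Hnall.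
    destruct (alln_sound D I bo HL nf n k s Hnf HI Hs Hnall) as (a & Ha).
    exists [Not_ (nf (App s (V (TB (S n), k))))]; split; [now left|].
    extend_model (upd I (TB (S n), k) a) HL.
    apply holds_Not; assumption.
Qed.

Theorem proposition14p1 :
  forall nf : tm -> tm, normalizer nf ->
  forall A : tm -> Prop, refutable nf A -> ~ satisfiable A.
Proof.
  intros nf Hnf A HR; induction HR as [A alts (_ & _ & Hrule) _ IH]; intros HA.
  destruct (rule_sound nf A alts Hnf Hrule HA) as (X & HX & HAX).
  exact (IH X HX HAX).
Qed.
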